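(* Let $X,Y$ be non-empty subsets of $A^+$. The following are equivalent: (i) $XY$ is a strong alt-induced code; (ii) $(X,Y)$ is a strong alternative code; (iii) $X$ is a prefix code, $Y$ is a suffix code, and $XY$ is a code.
   Context: $A$ is a finite alphabet, $A^*$ the set of words, $A^+$ the non-empty words, $XY=\{xy:x\in X,y\in Y\}$. For $X,Z\subseteq A^*$: $X^{-1}Z=\{u\in A^*: xu\in Z \text{ for some } x\in X\}$ and $ZY^{-1}=\{u\in A^*: uy\in Z\text{ for some } y\in Y\}$. A code is a subset of $A^+$ in which every word has at most one factorization into its elements. A prefix (suffix) code is a subset of $A^+$ in which no word is a proper prefix (suffix) of another. For non-empty $X,Y\subseteq A^+$, $(X,Y)$ is an alternative code if no word of $A^+$ admits two different similar alternative factorizations on $(X,Y)$ (factorizations $u_1\cdots u_n$, $n\ge2$, $u_i\in X\cup Y$, alternating between $X$ and $Y$; similar = beginning in the same set and ending in the same set); equivalently, $XY$ is a code and each element of $XY$ has exactly one factorization $xy$ with $x\in X,y\in Y$. An alternative code $(X,Y)$ is a strong alternative code if $X^{-1}(XY)\subseteq Y$ and $(XY)Y^{-1}\subseteq X$. A set $Z$ is a strong alt-induced code if $Z=XY$ for some strong alternative code $(X,Y)$. In (i), ''$XY$ is a strong alt-induced code'' is understood as in the paper, namely via this particular pair $(X,Y)$: $XY$ is a strong alt-induced code generated by $(X,Y)$. *)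

(* Words over a finite alphabet A are 'seq A';
   (possibly infinite) sets of words are Prop-valued predicates. *)
From mathcomp Require Import all_boot.
Set Implicit Arguments. Unset Strict Implicit. Unset Printing Implicit Defensive.

Definition lang (A : finType) := seq A -> Prop.

Section Words.
Variable A : finType.
Implicit Types X Y Z : lang A.

Definition sub_plus X := forall x, X x -> x <> [::].

Definition nonempty_lang X := exists x, X x.

Definition lconcat X Y : lang A :=
  fun w => exists x y, [/\ X x, Y y & w = x ++ y].

Definition is_code Z :=
  sub_plus Z /\
  forall s t : seq (seq A),
    (forall u, u \in s -> Z u) -> (forall u, u \in t -> Z u) ->
    flatten s = flatten t -> s = t.

Definition prefix_code X :=
  sub_plus X /\ forall x y, X x -> X y -> prefix x y -> x = y.
Definition suffix_code X :=
  sub_plus X /\ forall x y, X x -> X y -> suffix x y -> x = y.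

Fixpoint alt (P Q : lang A) (s : seq (seq A)) : Prop :=
  match s with
  | [::] => True
  | u :: s' => P u /\ alt Q P s'
  end.

(* no two different similar alternative factorizations beginning in P
   (similar: same starting set P, and same ending set, i.e. same parity
   of the number of factors) *)
Definition alt_unique (P Q : lang A) :=
  forall s t : seq (seq A),
    2 <= size s -> 2 <= size t ->
    alt P Q s -> alt P Q t ->
    odd (size s) = odd (size t) ->
    flatten s = flatten t -> s = t.

Definition alt_code X Y :=
  [/\ nonempty_lang X /\ nonempty_lang Y, sub_plus X, sub_plus Y,
      alt_unique X Y & alt_unique Y X].

(* X^{-1}(XY) subset of Y, and (XY)Y^{-1} subset of X *)
Definition strong_alt_code X Y :=
  [/\ alt_code X Y,
      (forall x u, X x -> lconcat X Y (x ++ u) -> Y u) &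
      (forall u y, Y y -> lconcat X Y (u ++ y) -> X u)].

Definition strong_alt_induced_by Z X Y :=
  strong_alt_code X Y /\ forall w, Z w <-> lconcat X Y w.

End Words.

From mathcomp Require Import all_boot.
Set Implicit Arguments. Unset Strict Implicit. Unset Printing Implicit Defensive.

(* Grouping an alternating factorization x1 y1 x2 y2 ... into the blocks
   (x1 y1) (x2 y2) ... turns factorizations over (X,Y) of even length into
   factorizations over XY and back.  If X is a prefix code, the grouping is
   injective, so uniqueness of alternating factorizations is the same as XY
   being a code (odd lengths are reduced to even ones by appending some y).
   A prefix code X gives X^{-1}(XY) <= Y, and dually a suffix code Y gives
   (XY)Y^{-1} <= X; conversely, under X^{-1}(XY) <= Y a proper prefix
   x' = x u in X yields the two factorizations x' y = x (u y), and dually. *)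

Section Words.
Variable T : eqType.
Implicit Types x y u v : seq T.

Lemma catsI x : injective (cat x).
Proof. by move=> u v /eqP; rewrite eqseq_cat // eqxx => /eqP. Qed.

Lemma catIs y : injective (cat^~ y).
Proof.
move=> u v E; have Euv : size u = size v.
  by apply/eqP; rewrite -(eqn_add2r (size y)) -!size_cat E.
by apply/eqP; move/eqP: E; rewrite eqseq_cat // eqxx andbT.
Qed.

Lemma cat_prefix_total x u x' v : x ++ u = x' ++ v -> prefix x x' || prefix x' x.
Proof.
move=> E; apply/orP; case: (leqP (size x) (size x')) => H; [left | right].
  by rewrite prefixE -(takel_cat v H) -E take_size_cat.
by rewrite prefixE -(takel_cat u (ltnW H)) E take_size_cat.
Qed.

Lemma cat_suffix_total u y v y' : u ++ y = v ++ y' -> suffix y y' || suffix y' y.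
Proof. by move=> E; apply: (@cat_prefix_total _ (rev u) _ (rev v)); rewrite -!rev_cat E. Qed.

Fixpoint pairs (f : seq (seq T)) : seq (seq T) :=
  if f is a :: b :: r then (a ++ b) :: pairs r else [::].

Lemma flatten_pairs f : ~~ odd (size f) -> flatten (pairs f) = flatten f.
Proof.
have [n] := ubnP (size f); elim: n f => // n IH [|a [|b r]] //= Hr.
by rewrite negbK catA => Or; rewrite IH // ltnW.
Qed.

End Words.

Section AlternativeCodes.
Variable A : finType.
Variables X Y : lang A.

Lemma prefix_code_catI x x' u v : prefix_code X -> X x -> X x' ->
  x ++ u = x' ++ v -> x = x' /\ u = v.
Proof.
move=> [_ pX] Hx Hx' E.
have Ex : x = x' by case/orP: (cat_prefix_total E) => H; [|apply/esym]; apply: pX.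
by move: E; rewrite Ex => /catsI.
Qed.

Lemma suffix_code_catI u v y y' : suffix_code Y -> Y y -> Y y' ->
  u ++ y = v ++ y' -> u = v /\ y = y'.
Proof.
move=> [_ sY] Hy Hy' E.
have Ey : y = y' by case/orP: (cat_suffix_total E) => H; [|apply/esym]; apply: sY.
by move: E; rewrite Ey => /catIs.
Qed.

Lemma alt_rcons (P Q : lang A) s y :
  alt P Q s -> (if odd (size s) then Q y else P y) -> alt P Q (rcons s y).
Proof.
elim: s P Q => [|a s IH] P Q //= [Ha Hs] Hy.
by split=> //; apply: IH => //; case: (odd (size s)) Hy.
Qed.

Lemma alt_flatten_nil (P Q : lang A) f :
  sub_plus P -> alt P Q f -> flatten f = [::] -> f = [::].
Proof. by move=> sP; case: f => // [[|c w] f] /= [/sP]. Qed.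

Lemma pairs_lconcat f : alt X Y f -> forall u, u \in pairs f -> lconcat X Y u.
Proof.
have [n] := ubnP (size f); elim: n f => // n IH [|a [|b r]] //= Hr [Ha [Hb Hrr]] u.
rewrite inE => /orP [/eqP -> | Hu]; first by exists a, b.
by apply: IH Hu => //; rewrite ltnW.
Qed.

Lemma lconcat_pairs s : (forall u, u \in s -> lconcat X Y u) ->
  exists f, [/\ alt X Y f, ~~ odd (size f), pairs f = s & flatten f = flatten s].
Proof.
elim: s => [|w s IH] Hs; first by exists [::].
have [f [Hf Of <- Ef]] : exists f, [/\ alt X Y f, ~~ odd (size f), pairs f = s &
    flatten f = flatten s].
  by apply: IH => u Hu; apply: Hs; rewrite inE Hu orbT.
have [x [y [Hx Hy ->]]] : lconcat X Y w by apply: Hs; rewrite inE eqxx.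
by exists [:: x, y & f]; split; rewrite //= ?negbK ?Ef ?catA.
Qed.

Lemma pairs_inj f g : prefix_code X -> alt X Y f -> alt X Y g ->
  ~~ odd (size f) -> ~~ odd (size g) -> pairs f = pairs g -> f = g.
Proof.
move=> pX; have [n] := ubnP (size f); elim: n f g => // n IH.
move=> [|a [|b f]] [|c [|d g]] //= Hn [Ha [Hb Hf]] [Hc [Hd Hg]].
rewrite !negbK => Of Og [/(prefix_code_catI pX Ha Hc) [<- <-] Efg].
by rewrite (IH f g) // ltnW.
Qed.

Lemma lconcat_code_alt_uniq f g : nonempty_lang Y -> prefix_code X ->
  is_code (lconcat X Y) -> alt X Y f -> alt X Y g ->
  odd (size f) = odd (size g) -> flatten f = flatten g -> f = g.
Proof.
move=> [y Hy] pX [_ cXY].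
have even_uniq f' g' : alt X Y f' -> alt X Y g' -> ~~ odd (size f') ->
    ~~ odd (size g') -> flatten f' = flatten g' -> f' = g'.
  move=> Hf Hg Of Og E; apply: pairs_inj => //.
  apply: cXY; [exact: pairs_lconcat Hf | exact: pairs_lconcat Hg |].
  by rewrite !flatten_pairs.
move=> Hf Hg Ofg E; case Of: (odd (size f)); last by apply: even_uniq => //; rewrite -?Ofg Of.
apply: (@rcons_injl _ y); apply: even_uniq; rewrite ?size_rcons /= -?Ofg ?Of //.
- by apply: alt_rcons; rewrite ?Of.
- by apply: alt_rcons; rewrite -?Ofg ?Of.
- by rewrite !flatten_rcons E.
Qed.

Lemma alt_unique_lconcat_code : sub_plus X -> alt_unique X Y -> is_code (lconcat X Y).
Proof.
move=> sX auXY; split=> [w [x [y [/sX + _ ->]]] | s t Hs Ht E]; first by case: x.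
have [f [Hf Of Pf Ef]] := lconcat_pairs Hs.
have [g [Hg Og Pg Eg]] := lconcat_pairs Ht.
have Efg : flatten f = flatten g by rewrite Ef Eg E.
rewrite -Pf -Pg {Pf Pg Ef Eg}; congr pairs.
case: f Hf Of Efg => [|a [|b f]] Hf Of Efg //.
  by rewrite (alt_flatten_nil sX Hg).
case: g Hg Og Efg => [|c [|d g]] Hg Og Efg //.
  by rewrite (alt_flatten_nil sX Hf Efg).
by apply: auXY => //=; rewrite /= !negbK in Of Og; rewrite (negbTE Of) (negbTE Og).
Qed.

End AlternativeCodes.

Section StrongAlternativeCodes.
Variable A : finType.
Variables X Y : lang A.
Hypotheses (neX : nonempty_lang X) (neY : nonempty_lang Y).
Hypotheses (sX : sub_plus X) (sY : sub_plus Y).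

Lemma strong_alt_prefix_code : strong_alt_code X Y -> prefix_code X.
Proof.
move=> [[_ _ _ auXY _] leftQ _]; split=> // x x' Hx Hx' /prefixP [u Eu].
have [y Hy] := neY.
have Huy : Y (u ++ y) by apply: (leftQ x) => //; exists x', y; split; rewrite // Eu catA.
have : [:: x; u ++ y] = [:: x'; y] by apply: auXY; rewrite //= Eu !cats0 catA.
by case.
Qed.

Lemma strong_alt_suffix_code : strong_alt_code X Y -> suffix_code Y.
Proof.
move=> [[_ _ _ auXY _] _ rightQ]; split=> // y y' Hy Hy' /suffixP [u Eu].
have [x Hx] := neX.
have Hxu : X (x ++ u) by apply: (rightQ _ y) => //; exists x, y'; split; rewrite // Eu catA.
have : [:: x ++ u; y] = [:: x; y'] by apply: auXY; rewrite //= Eu !cats0 catA.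
by case.
Qed.

Lemma prefix_suffix_strong_alt_code : prefix_code X -> suffix_code Y ->
  is_code (lconcat X Y) -> strong_alt_code X Y.
Proof.
move=> pX sufY cXY; split; first split => //.
- by move=> s t _ _; apply: lconcat_code_alt_uniq.
- move=> s t _ _ Hs Ht Ost Est; have [x Hx] := neX.
  have : x :: s = x :: t by apply: (lconcat_code_alt_uniq neY pX cXY); rewrite //= ?Ost ?Est.
  by case.
- by move=> x u Hx [x' [y' [Hx' Hy' /(prefix_code_catI pX Hx Hx') [_ ->]]]].
- by move=> u y Hy [x' [y' [Hx' Hy' /(suffix_code_catI sufY Hy Hy') [-> _]]]].
Qed.

End StrongAlternativeCodes.

Theorem theoremT (A : finType) (X Y : lang A) :
  nonempty_lang X -> nonempty_lang Y -> sub_plus X -> sub_plus Y ->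
  (strong_alt_induced_by (lconcat X Y) X Y <-> strong_alt_code X Y) /\
  (strong_alt_code X Y <->
     [/\ prefix_code X, suffix_code Y & is_code (lconcat X Y)]).
Proof.
move=> neX neY sX sY; split; first by split=> [[] // | H]; split.
split=> [H | [pX sufY cXY]]; last exact: prefix_suffix_strong_alt_code.
split; [exact: strong_alt_prefix_code neY sX H | exact: strong_alt_suffix_code neX sY H |].
by case: H => [[_ _ _ auXY _] _ _]; apply: alt_unique_lconcat_code.
Qed.
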